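(* Let $X$ be an $E\mathcal M$-simplicial set, $x\in X_n$, and $u_0,\dots,u_n\in\mathcal M$. Then for each $0\le k\le n$, $(u_0,\dots,u_n).x$ is $k$-supported on $\mathrm{im}(u_k)$. Moreover, if $x$ is $k$-supported on some co-infinite set $A$, then $(u_0,\dots,u_n).x$ is $k$-supported on $u_k(A)$.
   Context: $\omega=\{1,2,\dots\}$, $\mathcal M$ the monoid of injections $\omega\to\omega$, $\mathcal M_A$ the submonoid fixing $A\subset\omega$ elementwise; $A$ co-infinite if $\omega\setminus A$ is infinite. $E\mathcal M$ is the simplicial monoid with $(E\mathcal M)_n=\mathcal M^{1+n}$, pointwise multiplication, structure maps by precomposition; an $E\mathcal M$-simplicial set is a simplicial set with left $E\mathcal M$-action. $x\in X_n$ is $k$-supported on $A$ if $i_k(g).x=x$ for all $g\in\mathcal M_A$, where $i_k\colon\mathcal M\to\mathcal M^{1+n}$ is the inclusion of the $(1+k)$-th factor. *)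

From mathcomp Require Import all_boot.
Set Implicit Arguments. Unset Strict Implicit. Unset Printing Implicit Defensive.

(* omega = {1,2,...} is modelled by nat = {0,1,...} (a relabelling n |-> n+1). *)

Record inj : Type := Inj { fn :> nat -> nat; fn_inj : injective fn }.

Definition inj_one : inj := @Inj (fun a => a) (fun a b h => h).
Definition inj_mul (g h : inj) : inj :=
  @Inj (fun a => g (h a)) (inj_comp (@fn_inj g) (@fn_inj h)).

Definition fixes (A : nat -> Prop) (g : inj) : Prop := forall a, A a -> g a = a.
Definition coinfinite (A : nat -> Prop) : Prop := forall N, exists m, N <= m /\ ~ A m.
Definition im (u : inj) : nat -> Prop := fun a => exists b, u b = a.
Definition img (u : inj) (A : nat -> Prop) : nat -> Prop :=
  fun a => exists b, A b /\ u b = a.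

Definition EM (n : nat) := 'I_n.+1 -> inj.
Definition EM_one n : EM n := fun _ => inj_one.
Definition EM_mul n (g h : EM n) : EM n := fun i => inj_mul (g i) (h i).

(* Morphisms [m] -> [n] of the simplex category: monotone maps 'I_m.+1 -> 'I_n.+1. *)
Definition monotone m n (t : 'I_m.+1 -> 'I_n.+1) : Prop :=
  forall i j : 'I_m.+1, i <= j -> t i <= t j.

(* An E M-simplicial set: a simplicial set (presheaf on the simplex category,
   X_n indexed by nat, with structure maps X(t) : X_n -> X_m for monotone t)
   with a left action of the simplicial monoid E M, compatible with the
   structure maps (which act on E M by precomposition). *)
Record EMsSet : Type := {
  X :> nat -> Type;
  smap : forall m n (t : 'I_m.+1 -> 'I_n.+1), X n -> X m;
  smap_id : forall n (x : X n), smap (fun i => i) x = x;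
  smap_comp : forall m n p (t : 'I_m.+1 -> 'I_n.+1) (s : 'I_n.+1 -> 'I_p.+1)
      (x : X p), monotone t -> monotone s ->
      smap (fun i => s (t i)) x = smap t (smap s x);
  act : forall n, EM n -> X n -> X n;
  act_one : forall n (x : X n), act (@EM_one n) x = x;
  act_mul : forall n (g h : EM n) (x : X n), act (EM_mul g h) x = act g (act h x);
  act_smap : forall m n (t : 'I_m.+1 -> 'I_n.+1) (g : EM n) (x : X n),
      monotone t -> smap t (act g x) = act (fun i => g (t i)) (smap t x)
}.

Definition incl n (k : 'I_n.+1) (g : inj) : EM n :=
  fun i => if i == k then g else inj_one.

Definition supported (Xs : EMsSet) n (k : 'I_n.+1) (A : nat -> Prop) (x : Xs n) : Prop :=
  forall g : inj, fixes A g -> act (incl k g) x = x.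

(* Left multiplication by i_k(g) replaces the k-th coordinate u_k of u by g u_k;
   if g fixes im(u_k) this is u_k again.  If g only fixes u_k(A), then g u_k
   and u_k agree on A.  As A is co-infinite, the complements of A and of u_k(A)
   are both countably infinite, so u_k|A extends to an injection g0 mapping the
   complement of A onto that of u_k(A).  Every injection agreeing with u_k on A
   then factors as g0 h with h in M_A, and right multiplication by i_k(h) does
   not move x; hence g u_k and u_k both act on x as g0 does. *)

From mathcomp Require Import all_boot boolp classical_sets cardinality.
Set Implicit Arguments. Unset Strict Implicit. Unset Printing Implicit Defensive.

Local Open Scope classical_set_scope.
Local Open Scope card_scope.

Lemma inj_ext (f g : inj) : f =1 g -> f = g.
Proof.
case: f g => f f_inj [g g_inj] /= /funext fg; subst g.
by rewrite (Prop_irrelevance f_inj g_inj).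
Qed.

Lemma inj_factor (g f : inj) (A : nat -> Prop) :
  (forall a, A a -> f a = g a) -> (forall m, im g (f m)) ->
  exists2 h : inj, fixes A h & f = inj_mul g h.
Proof.
move=> fgA img_f.
have ex_pre m : exists b, g b == f m by have [b gb] := img_f m; exists b; apply/eqP.
pose h m := xchoose (ex_pre m).
have ghE m : g (h m) = f m by apply/eqP/(xchooseP (ex_pre m)).
have h_inj : injective h by move=> m m' hm; apply: (@fn_inj f); rewrite -!ghE hm.
exists (Inj h_inj) => [a Aa | ]; last by apply: inj_ext => m /=; rewrite ghE.
by apply: (@fn_inj g); rewrite /= ghE fgA.
Qed.

Lemma coinfinite_infinite (A : nat -> Prop) : coinfinite A -> infinite_set (~` A).
Proof.
move=> coA /finite_seqP[X XE].
have [m [ltXm nAm]] := coA (\max_(x <- X) x).+1.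
have : (~` A) m := nAm; rewrite XE => Xm.
by move: ltXm; rewrite ltnNge leq_bigmax_seq.
Qed.

Lemma infinite_compl_img (f : inj) (A : nat -> Prop) :
  coinfinite A -> infinite_set (~` img f A).
Proof.
move=> /coinfinite_infinite infA fin_fA.
apply: infA; apply: (card_le_finite _ (sub_finite_set _ fin_fA)).
- by rewrite -(card_le_eql (inj_card_eq (in2W (@fn_inj f)))).
- by move=> _ [m nAm <-] [a [Aa /fn_inj am]]; apply: nAm; rewrite -am.
Qed.

Lemma inj_extend_onto (f : inj) (A : nat -> Prop) : coinfinite A ->
  exists g : inj, (forall a, A a -> g a = f a) /\ (forall m, ~ img f A m -> im g m).
Proof.
move=> coA.
have card_nA : ~` A #= ~` img f A.
  apply: (card_eq_trans (eq_card_nat (countableP _) (coinfinite_infinite coA))).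
  exact: card_esym (eq_card_nat (countableP _) (infinite_compl_img (f := f) coA)).
have [s [s_fun s_inj s_surj]] := card_set_bijP card_nA.
pose g m := if `[< A m >] then f m else s m.
have gA a : A a -> g a = f a by move=> Aa; rewrite /g asboolT.
have gNA m : ~ A m -> g m = s m by move=> nAm; rewrite /g asboolF.
have g_inj : injective g.
  move=> m m'; case: (pselect (A m)) => [Am | nAm]; case: (pselect (A m')) => [Am' | nAm'].
  - by rewrite !gA //; apply: fn_inj.
  - rewrite gA // gNA // => fm; exfalso.
    by apply: (s_fun _ nAm'); rewrite -fm; exists m.
  - rewrite gNA // gA // => fm; exfalso.
    by apply: (s_fun _ nAm); rewrite fm; exists m'.
  - by rewrite !gNA // => /s_inj; apply; apply: mem_set.
exists (Inj g_inj); split=> // m /s_surj[b nAb sb].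
by exists b; rewrite /= gNA.
Qed.

Lemma coinfinite_common_factor (f : inj) (A : nat -> Prop) : coinfinite A ->
  exists g : inj, forall f' : inj, (forall a, A a -> f' a = f a) ->
    exists2 h : inj, fixes A h & f' = inj_mul g h.
Proof.
move=> /(inj_extend_onto f)[g [gA g_onto]]; exists g => f' f'A.
apply: inj_factor => [a Aa | m]; first by rewrite f'A ?gA.
case: (pselect (A m)) => [Am | nAm]; first by exists m; rewrite gA ?f'A.
by apply: g_onto => -[a [Aa fa]]; apply: nAm; rewrite -(@fn_inj f' a m) // f'A.
Qed.

Definition EM_upd n (u : EM n) (k : 'I_n.+1) (p : inj) : EM n :=
  fun i => if i == k then p else u i.

Section EMUpdate.
Variables (n : nat) (u : EM n) (k : 'I_n.+1).

Lemma EM_upd_id : EM_upd u k (u k) = u.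
Proof. by apply: funext => i; rewrite /EM_upd; case: eqP => [->|]. Qed.

Lemma EM_mul_incll g : EM_mul (incl k g) u = EM_upd u k (inj_mul g (u k)).
Proof.
by apply: funext => i; rewrite /EM_mul /incl /EM_upd; case: eqP => [->|_] //; exact: inj_ext.
Qed.

Lemma EM_mul_inclr f h : EM_mul (EM_upd u k f) (incl k h) = EM_upd u k (inj_mul f h).
Proof.
by apply: funext => i; rewrite /EM_mul /incl /EM_upd; case: eqP => // _; exact: inj_ext.
Qed.

End EMUpdate.

Section SupportedAction.
Variables (Xs : EMsSet) (n : nat) (x : Xs n) (k : 'I_n.+1) (A : nat -> Prop).
Hypothesis x_supp : supported k A x.

Lemma act_upd_mul_fixes (u : EM n) f h :
  fixes A h -> act (EM_upd u k (inj_mul f h)) x = act (EM_upd u k f) x.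
Proof. by move=> h_fix; rewrite -EM_mul_inclr act_mul x_supp. Qed.

Lemma act_upd_agree (u : EM n) (f f' : inj) : coinfinite A ->
  (forall a, A a -> f' a = f a) -> act (EM_upd u k f') x = act (EM_upd u k f) x.
Proof.
move=> /(coinfinite_common_factor f)[g g_factor] f'A.
have [h' h'_fix ->] := g_factor f' f'A.
have [h h_fix ->] := g_factor f (fun _ _ => erefl).
by rewrite !act_upd_mul_fixes.
Qed.

End SupportedAction.

Theorem lemma2p5 (Xs : EMsSet) (n : nat) (x : Xs n) (u : EM n) :
  forall k : 'I_n.+1,
    supported k (im (u k)) (act u x) /\
    (forall A : nat -> Prop, coinfinite A -> supported k A x ->
       supported k (img (u k) A) (act u x)).
Proof.
move=> k; split=> [g g_fix | A coA x_supp g g_fix]; rewrite -act_mul EM_mul_incll.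
  have -> : inj_mul g (u k) = u k by apply: inj_ext => a; apply: g_fix; exists a.
  by rewrite EM_upd_id.
rewrite (act_upd_agree x_supp u (f := u k) coA) ?EM_upd_id // => a Aa.
by apply: g_fix; exists a.
Qed.
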